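(* Let $X$ be a real Hilbert space and $T\colon X\to X$ averaged nonexpansive with $\operatorname{Fix}T\ne\varnothing$. Suppose that for every $\rho>0$ there exists $\theta<1$ such that for every $x$ with $\|x\|\le\rho$ there is $y\in\operatorname{Fix}T$ with $\langle x-y,Tx-y\rangle\le\theta\|x-y\|\,\|Tx-y\|$. Then $T$ is boundedly linearly regular; moreover, if $\theta$ can be chosen independently of $\rho$, then $T$ is linearly regular.
   Context: $T$ is averaged nonexpansive if $T=(1-\lambda)\mathrm{Id}+\lambda N$ with $\lambda\in[0,1[$ and $N$ nonexpansive. $T$ is linearly regular if there is $\kappa\ge0$ with $d_{\operatorname{Fix}T}(x)\le\kappa\|x-Tx\|$ for all $x\in X$; boundedly linearly regular if for each $\rho>0$ there is $\kappa\ge0$ with this inequality for all $\|x\|\le\rho$. *)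

From Stdlib Require Import Reals.
Open Scope R_scope.

Record HilbertSpace := {
  hcar :> Type;
  hzero : hcar;
  hadd : hcar -> hcar -> hcar;
  hopp : hcar -> hcar;
  hscal : R -> hcar -> hcar;
  hinner : hcar -> hcar -> R;
  hadd_assoc : forall x y z, hadd x (hadd y z) = hadd (hadd x y) z;
  hadd_comm : forall x y, hadd x y = hadd y x;
  hadd_zero : forall x, hadd x hzero = x;
  hadd_opp : forall x, hadd x (hopp x) = hzero;
  hscal_one : forall x, hscal 1 x = x;
  hscal_assoc : forall a b x, hscal a (hscal b x) = hscal (a * b) x;
  hscal_distr_l : forall a x y, hscal a (hadd x y) = hadd (hscal a x) (hscal a y);
  hscal_distr_r : forall a b x, hscal (a + b) x = hadd (hscal a x) (hscal b x);
  hinner_sym : forall x y, hinner x y = hinner y x;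
  hinner_add_l : forall x y z, hinner (hadd x y) z = hinner x z + hinner y z;
  hinner_scal_l : forall a x y, hinner (hscal a x) y = a * hinner x y;
  hinner_pos : forall x, 0 <= hinner x x;
  hinner_def : forall x, hinner x x = 0 -> x = hzero;
  hcomplete : forall u : nat -> hcar,
    (forall eps, 0 < eps -> exists N, forall m n, (N <= m)%nat -> (N <= n)%nat ->
        sqrt (hinner (hadd (u m) (hopp (u n))) (hadd (u m) (hopp (u n)))) < eps) ->
    exists l, forall eps, 0 < eps -> exists N, forall n, (N <= n)%nat ->
        sqrt (hinner (hadd (u n) (hopp l)) (hadd (u n) (hopp l))) < eps
}.

Arguments hzero {_}.
Arguments hadd {_}.
Arguments hopp {_}.
Arguments hscal {_}.
Arguments hinner {_}.

Definition hsub {X : HilbertSpace} (x y : X) : X := hadd x (hopp y).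
Definition hnorm {X : HilbertSpace} (x : X) : R := sqrt (hinner x x).

Definition Fix {X : HilbertSpace} (T : X -> X) : X -> Prop := fun x => T x = x.

Definition nonexpansive {X : HilbertSpace} (N : X -> X) : Prop :=
  forall x y, hnorm (hsub (N x) (N y)) <= hnorm (hsub x y).

Definition averaged_nonexpansive {X : HilbertSpace} (T : X -> X) : Prop :=
  exists (lam : R) (N : X -> X), 0 <= lam /\ lam < 1 /\ nonexpansive N /\
    forall x, T x = hadd (hscal (1 - lam) x) (hscal lam (N x)).

Definition is_dist {X : HilbertSpace} (C : X -> Prop) (x : X) (d : R) : Prop :=
  (forall y, C y -> d <= hnorm (hsub x y)) /\
  (forall b, (forall y, C y -> b <= hnorm (hsub x y)) -> b <= d).

Definition linearly_regular {X : HilbertSpace} (T : X -> X) : Prop :=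
  exists kappa, 0 <= kappa /\
    forall x d, is_dist (Fix T) x d -> d <= kappa * hnorm (hsub x (T x)).

Definition boundedly_linearly_regular {X : HilbertSpace} (T : X -> X) : Prop :=
  forall rho, 0 < rho -> exists kappa, 0 <= kappa /\
    forall x d, hnorm x <= rho -> is_dist (Fix T) x d ->
      d <= kappa * hnorm (hsub x (T x)).

(* If the angle at a fixed point y between x - y and T x - y is bounded away
   from 0 in the sense <x - y, Tx - y> <= θ |x - y| |Tx - y| with θ < 1, then
   the law of cosines gives |x - Tx|^2 >= |x - y|^2 + |Tx - y|^2 - 2θ|x - y||Tx - y|
   >= (1 - θ)^2 |x - y|^2, so d(x, Fix T) <= |x - y| <= |x - Tx| / (1 - θ). *)

From Stdlib Require Import Reals Lra Psatz.
Open Scope R_scope.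

Section InnerProduct.

Variable X : HilbertSpace.

Lemma hinner_zero_l (z : X) : hinner hzero z = 0.
Proof.
  pose proof (hinner_add_l X hzero hzero z) as H.
  rewrite hadd_zero in H. lra.
Qed.

Lemma hinner_opp_l (x z : X) : hinner (hopp x) z = - hinner x z.
Proof.
  pose proof (hinner_add_l X x (hopp x) z) as H.
  rewrite hadd_opp, hinner_zero_l in H. lra.
Qed.

Lemma hinner_sub_l (x y z : X) : hinner (hsub x y) z = hinner x z - hinner y z.
Proof. unfold hsub. rewrite hinner_add_l, hinner_opp_l. lra. Qed.

Lemma hinner_sub_r (x y z : X) : hinner z (hsub x y) = hinner z x - hinner z y.
Proof. rewrite hinner_sym, hinner_sub_l, (hinner_sym X x), (hinner_sym X y). lra. Qed.

Lemma hnorm_ge0 (x : X) : 0 <= hnorm x.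
Proof. apply sqrt_pos. Qed.

Lemma hnorm_sqr (x : X) : hnorm x * hnorm x = hinner x x.
Proof. apply sqrt_sqrt, hinner_pos. Qed.

Lemma law_of_cosines (x y z : X) :
  hnorm (hsub x z) * hnorm (hsub x z) =
  hnorm (hsub x y) * hnorm (hsub x y) + hnorm (hsub z y) * hnorm (hsub z y)
  - 2 * hinner (hsub x y) (hsub z y).
Proof.
  rewrite !hnorm_sqr, !hinner_sub_l, !hinner_sub_r.
  rewrite (hinner_sym X z x), (hinner_sym X y x), (hinner_sym X y z). lra.
Qed.

End InnerProduct.

(* Since a^2 + b^2 - 2tab = t(a - b)^2 + (1 - t)(a^2 + b^2) >= (1 - t)a^2. *)
Lemma cosine_side_lower_bound (a b c ip t : R) :
  0 <= a -> 0 <= b -> 0 <= c -> 0 <= t < 1 ->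
  ip <= t * a * b -> c * c = a * a + b * b - 2 * ip -> (1 - t) * a <= c.
Proof.
  intros Ha Hb Hc [Ht0 Ht1] Hip Hc2.
  assert (Hsq : (1 - t) * a * ((1 - t) * a) <= c * c).
  { pose proof (Rle_0_sqr (a - b)). pose proof (Rle_0_sqr b). unfold Rsqr in *.
    assert (0 <= t * ((a - b) * (a - b)) + (1 - t) * (b * b)).
    { apply Rplus_le_le_0_compat; apply Rmult_le_pos; lra. }
    nra. }
  destruct (Rle_lt_dec ((1 - t) * a) c) as [Hle | Hlt]; [exact Hle |].
  nra.
Qed.

(* Negative θ only strengthen the hypothesis, so they are clipped to 0. *)
Definition regularity_constant (theta : R) : R := / (1 - Rmax theta 0).

Lemma regularity_constant_ge0 (theta : R) :
  theta < 1 -> 0 <= regularity_constant theta.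
Proof.
  intros Ht. apply Rlt_le, Rinv_0_lt_compat.
  assert (Rmax theta 0 < 1) by (apply Rmax_lub_lt; lra). lra.
Qed.

Lemma is_dist_le_of_angle_bound (X : HilbertSpace) (C : X -> Prop)
    (theta : R) (x y z : X) (d : R) :
  theta < 1 -> C y ->
  hinner (hsub x y) (hsub z y) <= theta * hnorm (hsub x y) * hnorm (hsub z y) ->
  is_dist C x d ->
  d <= regularity_constant theta * hnorm (hsub x z).
Proof.
  intros Htheta Hy Hangle [Hd _].
  set (t := Rmax theta 0).
  assert (Ht : 0 <= t < 1) by (split; [apply Rmax_r | apply Rmax_lub_lt; lra]).
  pose proof (hnorm_ge0 X (hsub x y)) as Ha.
  pose proof (hnorm_ge0 X (hsub z y)) as Hb.
  assert (Hangle_t :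
    hinner (hsub x y) (hsub z y) <= t * hnorm (hsub x y) * hnorm (hsub z y)).
  { assert (theta <= t) by apply Rmax_l.
    pose proof (Rmult_le_pos _ _ Ha Hb). nra. }
  pose proof (cosine_side_lower_bound _ _ _ _ _ Ha Hb (hnorm_ge0 X (hsub x z))
                Ht Hangle_t (law_of_cosines X x y z)) as Hlow.
  apply Rle_trans with (hnorm (hsub x y)); [exact (Hd y Hy) |].
  apply Rmult_le_reg_l with (1 - t); [lra |].
  unfold regularity_constant; fold t.
  rewrite <- Rmult_assoc, Rinv_r by lra. lra.
Qed.

Theorem lemma3p5 (X : HilbertSpace) (T : X -> X) :
  averaged_nonexpansive T ->
  (exists z, Fix T z) ->
  (forall rho, 0 < rho -> exists theta, theta < 1 /\
     forall x : X, hnorm x <= rho -> exists y, Fix T y /\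
       hinner (hsub x y) (hsub (T x) y) <= theta * hnorm (hsub x y) * hnorm (hsub (T x) y)) ->
  boundedly_linearly_regular T /\
  ((exists theta, theta < 1 /\
     forall rho, 0 < rho -> forall x : X, hnorm x <= rho -> exists y, Fix T y /\
       hinner (hsub x y) (hsub (T x) y) <= theta * hnorm (hsub x y) * hnorm (hsub (T x) y)) ->
   linearly_regular T).
Proof.
  intros _ _ Hlocal. split.
  - intros rho Hrho. destruct (Hlocal rho Hrho) as [theta [Htheta Hangle]].
    exists (regularity_constant theta).
    split; [now apply regularity_constant_ge0 |].
    intros x d Hx Hd. destruct (Hangle x Hx) as [y [Hy Hxy]].
    exact (is_dist_le_of_angle_bound X _ _ _ _ _ _ Htheta Hy Hxy Hd).
  - intros [theta [Htheta Hangle]].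
    exists (regularity_constant theta).
    split; [now apply regularity_constant_ge0 |].
    intros x d Hd.
    assert (Hrho : 0 < hnorm x + 1) by (pose proof (hnorm_ge0 X x); lra).
    destruct (Hangle _ Hrho x ltac:(lra)) as [y [Hy Hxy]].
    exact (is_dist_le_of_angle_bound X _ _ _ _ _ _ Htheta Hy Hxy Hd).
Qed.
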